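(* Let $f$ be a generalized polynomial and let $D$ be a nonconstant complex polynomial. For each $a\in\mathbb{C}$ let $\mu_a$ be the multiplicity of $a$ as a root of $D$. Then there is a unique pair $(q,R)$ such that $q$ is a generalized polynomial, $R$ is a complex polynomial of degree $<\deg D$, and $f=D\,q+R$. Moreover $R$ is given by the Taylor–Gauss Formula $$R(X)=\sum_{D(a)=0}\ J_a^{\mu_a-1}\!\left(f(X)\,\frac{(X-a)^{\mu_a}}{D(X)}\right)\frac{D(X)}{(X-a)^{\mu_a}}.$$
   Context: For $a\in\mathbb{C}$, a Laurent series in $X-a$ is a formal sum $\sum_{n\in\mathbb{Z}} f_{a,n}(X-a)^n$ with complex coefficients, only finitely many nonzero coefficients of negative index; these form a field $\mathbb{C}((X-a))$. A generalized rational fraction is a family $f=(f_a)_{a\in\mathbb{C}}$ with $f_a\in\mathbb{C}((X-a))$; such families are added, multiplied and differentiated componentwise. A complex polynomial $P$ is identified with the family $\big(\sum_{n\ge0}\frac{P^{(n)}(a)}{n!}(X-a)^n\big)_{a\in\mathbb{C}}$ of its Taylor expansions; a nonzero polynomial is invertible in this ring, so $f/D$ makes sense. A generalized polynomial is a generalized rational fraction $f$ with $f_a\in\mathbb{C}[[X-a]]$ for all $a$ (''$f$ is defined at every point''). For a generalized rational fraction $f$, $a\in\mathbb{C}$ and $k\in\mathbb{Z}$, $J_a^{k}(f):=\sum_{n\le k} f_{a,n}(X-a)^n$ (the order-$k$ expansion of $f$ at $a$); when $f$ is defined at $a$ and $k\ge 0$ this is a polynomial of degree $\le k$. *)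

From mathcomp Require Import all_boot all_algebra.
From mathcomp Require Import complex reals boolp.
Set Implicit Arguments.
Unset Strict Implicit.
Unset Printing Implicit Defensive.
Import GRing.Theory Num.Theory.
Local Open Scope ring_scope.

Section GenFrac.
Variable K : fieldType.

(* A Laurent series in (X - a) is given by its coefficient function
   n |-> f_{a,n}; it is a genuine Laurent series when only finitely many
   coefficients of negative index are nonzero. *)
Definition laurent := int -> K.

Definition is_laurent (c : laurent) : Prop :=
  exists N : int, forall n : int, n < N -> c n = 0.

(* A valid lower bound for the support (chosen classically; 0 if c is not
   a Laurent series -- junk value). *)
Definition lbound (c : laurent) : int :=
  match pselect (is_laurent c) with
  | left h => sval (cid h)
  | right _ => 0
  end.

Definition mulL (c d : laurent) : laurent := fun n =>
  let N1 := lbound c in let N2 := lbound d in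
  if (N1 + N2 <= n)%R then
    \sum_(i < (absz (n - N1 - N2)%R).+1) c (N1 + i%:Z) * d (n - N1 - i%:Z)
  else 0.

Definition addL (c d : laurent) : laurent := fun n => c n + d n.

Definition oneL : laurent := fun n => (n == 0)%:R.

Definition invL (c : laurent) : laurent :=
  match pselect (exists d, is_laurent d /\ mulL c d = oneL) with
  | left h => sval (cid h)
  | right _ => fun _ => 0
  end.

Definition genfrac := K -> laurent.

Definition is_genfrac (f : genfrac) : Prop := forall a, is_laurent (f a).

Definition is_genpoly (f : genfrac) : Prop :=
  forall a (n : int), n < 0 -> f a n = 0.

Definition addGF (f g : genfrac) : genfrac := fun a => addL (f a) (g a).
Definition mulGF (f g : genfrac) : genfrac := fun a => mulL (f a) (g a).

(* Taylor expansion of a polynomial P at a: coefficient of (X-a)^n is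
   P^(n)(a)/n!, i.e. (P^`N(n)).[a]. *)
Definition taylor (a : K) (P : {poly K}) : laurent := fun n =>
  match n with
  | Posz m => (P^`N(m)).[a]
  | Negz _ => 0
  end.

Definition polyGF (P : {poly K}) : genfrac := fun a => taylor a P.

Definition divGF (f : genfrac) (D : {poly K}) : genfrac :=
  fun a => mulL (f a) (invL (taylor a D)).

(* J_a^k(f) for k >= 0, as a polynomial of degree <= k: the order-k
   expansion sum_{0 <= n <= k} f_{a,n} (X-a)^n.  (This is J_a^k(f) when f is
   defined at a, which is the only situation in which it is used.) *)
Definition Jpoly (a : K) (k : nat) (f : genfrac) : {poly K} :=
  \sum_(i < k.+1) f a (Posz i) *: ('X - a%:P) ^+ i.

Definition TG_term (f : genfrac) (D : {poly K}) (a : K) : {poly K} :=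
  let mu := mup a D in
  Jpoly a mu.-1 (divGF (mulGF f (polyGF (('X - a%:P) ^+ mu))) D)
  * (D %/ ('X - a%:P) ^+ mu).

End GenFrac.

(* Let mu_a be the multiplicity of a in D and write D = (X - a)^mu_a E_a with
   E_a(a) <> 0.  The expansion of D at a is then invertible in K((X - a)), so
   f - R = D q with q a generalized polynomial exactly when R agrees with f to
   order mu_a - 1 at every root a of D.  Two polynomials of degree < deg D that
   agree in this sense differ by a multiple of D, hence coincide, and q is then
   unique because D is invertible at every point.  The Taylor-Gauss sum has the
   required jets: its a-summand J_a(f (X - a)^mu_a / D) E_a agrees with f to
   order mu_a - 1 at a, while every other summand is divisible by
   (X - a)^mu_a. *)

From mathcomp Require Import all_boot all_algebra.
From mathcomp Require Import complex reals boolp.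
From mathcomp Require Import zify.
Set Implicit Arguments.
Unset Strict Implicit.
Unset Printing Implicit Defensive.
Import GRing.Theory.
Local Open Scope ring_scope.

Lemma coefM_eq_upto (R : nzRingType) k (A B A' B' : {poly R}) :
    (forall i, (i <= k)%N -> A`_i = A'`_i) ->
    (forall i, (i <= k)%N -> B`_i = B'`_i) ->
  (A * B)`_k = (A' * B')`_k.
Proof.
move=> eqA eqB; rewrite !coefM; apply: eq_bigr => i _.
by rewrite eqA ?eqB ?leq_subr // -ltnS.
Qed.

Section LaurentSeries.
Variable K : fieldType.
Implicit Types c d e : laurent K.

Definition vanish_below c (N : int) := forall n : int, n < N -> c n = 0.

Lemma vanish_below_lbound c : is_laurent c -> vanish_below c (lbound c).
Proof. by rewrite /lbound => Lc; case: pselect => // Lc'; case: (cid Lc'). Qed.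

Definition window c (N : int) (m : nat) : {poly K} :=
  \poly_(i < m.+1) c (N + i%:Z).

(* Truncating Laurent series to polynomial windows reduces their products to
   products of polynomials. *)
Definition mul_window c d (N1 N2 : int) (m : nat) (n : int) : K :=
  if N1 + N2 <= n then (window c N1 m * window d N2 m)`_(absz (n - N1 - N2)%R)
  else 0.

Lemma mul_windowE c d N1 N2 m n : N1 + N2 <= n ->
  mul_window c d N1 N2 m n = (window c N1 m * window d N2 m)`_(absz (n - N1 - N2)%R).
Proof. by rewrite /mul_window => ->. Qed.

Lemma mulL_lbound c d n : mulL c d n =
  mul_window c d (lbound c) (lbound d) (absz (n - lbound c - lbound d)%R) n.
Proof.
rewrite /mulL /mul_window; case: ifP => // le_n; rewrite coefM.
apply: eq_bigr => i _; have := ltn_ord i; rewrite ltnS => le_i.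
by rewrite !coef_poly !ltnS le_i leq_subr; congr (_ * d _); lia.
Qed.

Lemma mul_window_widen c d N1 N2 m m' n :
    (absz (n - N1 - N2)%R <= m)%N -> (absz (n - N1 - N2)%R <= m')%N ->
  mul_window c d N1 N2 m n = mul_window c d N1 N2 m' n.
Proof.
move=> le_m le_m'; rewrite /mul_window; case: ifP => // _.
by apply: coefM_eq_upto => i le_i;
  rewrite !coef_poly !ltnS (leq_trans le_i le_m) (leq_trans le_i le_m').
Qed.

Lemma window_lower c N M m i : vanish_below c N -> M <= N -> (i <= m)%N ->
  (window c M m)`_i = ('X^(absz (N - M)%R) * window c N m)`_i.
Proof.
move=> vc leMN le_im; rewrite coefXnM !coef_poly ltnS le_im.
case: ltnP => lt_i; first by apply: vc; lia.
by rewrite ltnS (leq_trans (leq_subr _ _) le_im); congr c; lia.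
Qed.

Lemma mul_window_lower c d N1 N2 M1 M2 m n :
    vanish_below c N1 -> vanish_below d N2 -> M1 <= N1 -> M2 <= N2 ->
    (absz (n - M1 - M2)%R <= m)%N ->
  mul_window c d M1 M2 m n = mul_window c d N1 N2 m n.
Proof.
move=> vc vd le1 le2 le_m; rewrite /mul_window.
case: ifP => leM; last by case: ifP => // leN; move/negbT: leM; lia.
rewrite (@coefM_eq_upto _ _ _ _ ('X^(absz (N1 - M1)%R) * window c N1 m)
   ('X^(absz (N2 - M2)%R) * window d N2 m)); first last.
- by move=> i le_i; apply: window_lower => //; apply: leq_trans le_i le_m.
- by move=> i le_i; apply: window_lower => //; apply: leq_trans le_i le_m.
rewrite mulrACA -exprD coefXnM.
case: ltnP => bound_k; case: ifP => leN //.
- by exfalso; lia.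
- by congr nth; lia.
- by exfalso; move/negbT: leN; lia.
Qed.

(* [mulL] is defined through the classically chosen bounds [lbound]; any
   lower bounds and any wide enough window compute the same coefficient. *)
Lemma mulL_window c d N1 N2 m n : vanish_below c N1 -> vanish_below d N2 ->
  (absz (n - N1 - N2)%R <= m)%N -> mulL c d n = mul_window c d N1 N2 m n.
Proof.
move=> vc vd le_m.
have vL1 : vanish_below c (lbound c) by apply: vanish_below_lbound; exists N1.
have vL2 : vanish_below d (lbound d) by apply: vanish_below_lbound; exists N2.
set L1 := lbound c in vL1 *; set L2 := lbound d in vL2 *.
pose M1 := N1 - (absz (N1 - L1)%R)%:Z; pose M2 := N2 - (absz (N2 - L2)%R)%:Z.
pose m' := (m + absz (n - M1 - M2)%R + absz (n - L1 - L2)%R)%N.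
rewrite mulL_lbound -/L1 -/L2 (@mul_window_widen _ _ _ _ _ m'); [|done|lia].
rewrite -(@mul_window_lower _ _ L1 L2 M1 M2) //; try lia.
rewrite (@mul_window_lower _ _ N1 N2 M1 M2) //; try lia.
by apply: mul_window_widen; lia.
Qed.

Lemma vanish_below_mulL c d N1 N2 : vanish_below c N1 -> vanish_below d N2 ->
  vanish_below (mulL c d) (N1 + N2).
Proof.
move=> vc vd n lt_n; rewrite (@mulL_window _ _ N1 N2 (absz (n - N1 - N2)%R)) //.
by rewrite /mul_window; case: ifP => //; lia.
Qed.

Lemma mulL_laurent c d : is_laurent c -> is_laurent d -> is_laurent (mulL c d).
Proof. by case=> N1 v1 [N2 v2]; exists (N1 + N2); apply: vanish_below_mulL. Qed.

Lemma mulLC c d : is_laurent c -> is_laurent d -> mulL c d = mulL d c.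
Proof.
case=> N1 v1 [N2 v2]; apply: funext => n.
rewrite (@mulL_window _ _ N1 N2 (absz (n - N1 - N2)%R)) //.
rewrite (@mulL_window _ _ N2 N1 (absz (n - N1 - N2)%R)) //; last by lia.
by rewrite /mul_window (addrC N2) (addrAC n) mulrC.
Qed.

Lemma window_mulL c d N1 N2 k i : vanish_below c N1 -> vanish_below d N2 ->
  (i <= k)%N -> (window (mulL c d) (N1 + N2) k)`_i = (window c N1 k * window d N2 k)`_i.
Proof.
move=> v1 v2 le_i; rewrite coef_poly ltnS le_i.
rewrite (@mulL_window _ _ N1 N2 k) //; last by lia.
by rewrite mul_windowE; [congr nth | ]; lia.
Qed.

Lemma mulLA c d e : is_laurent c -> is_laurent d -> is_laurent e ->
  mulL (mulL c d) e = mulL c (mulL d e).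
Proof.
case=> N1 v1 [N2 v2] [N3 v3]; apply: funext => n.
have v12 := vanish_below_mulL v1 v2; have v23 := vanish_below_mulL v2 v3.
set k := absz (n - N1 - N2 - N3)%R.
rewrite (@mulL_window _ _ (N1 + N2) N3 k) //; last by lia.
rewrite (@mulL_window _ _ N1 (N2 + N3) k) //; last by lia.
rewrite /mul_window addrA; case: ifP => // _.
rewrite (@coefM_eq_upto _ _ _ _ (window c N1 k * window d N2 k) (window e N3 k));
  [|by move=> i le_i; apply: window_mulL => //; lia | by []].
rewrite [RHS](@coefM_eq_upto _ _ _ _ (window c N1 k) (window d N2 k * window e N3 k));
  [|by [] | by move=> i le_i; apply: window_mulL => //; lia].
by rewrite mulrA; congr nth; lia.
Qed.

Lemma vanish_below_oneL : vanish_below (oneL K) 0.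
Proof. by move=> n lt_n; rewrite /oneL; have -> : (n == 0) = false by lia. Qed.

Lemma oneL_laurent : is_laurent (oneL K).
Proof. by exists 0; apply: vanish_below_oneL. Qed.

Lemma mulL1 c : is_laurent c -> mulL c (oneL K) = c.
Proof.
case=> N v; apply: funext => n; set m := absz (n - N - 0)%R.
rewrite (@mulL_window _ _ N 0 m) //; last exact: vanish_below_oneL.
rewrite /mul_window addr0; case: ifP => le_n; last by rewrite v //; lia.
rewrite (@coefM_eq_upto _ _ _ _ (window c N m) 1) //; last first.
  by move=> [|i] le_i; rewrite coef_poly ltnS le_i coef1.
by rewrite mulr1 coef_poly ltnS leqnn; congr c; lia.
Qed.

Lemma mulL_series c d (k : nat) (A B : {poly K}) :
    vanish_below c 0 -> vanish_below d 0 ->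
    (forall i, (i <= k)%N -> A`_i = c i) -> (forall i, (i <= k)%N -> B`_i = d i) ->
  mulL c d k = (A * B)`_k.
Proof.
move=> vc vd eqA eqB; rewrite (@mulL_window _ _ 0 0 k) //; last by lia.
rewrite mul_windowE // !subr0 absz_nat; apply: coefM_eq_upto => i le_i;
  by rewrite coef_poly ltnS le_i add0r (eqA, eqB).
Qed.

(* Upwards from the lower bound [N] of [c]: the coefficient of [u * c] at
   [k + N + j] is [u k * c (N + j)] plus terms already known to vanish. *)
Lemma mulL_vanish_below_series u c (k : nat) : vanish_below u k -> u k != 0 ->
  is_laurent c -> vanish_below (mulL u c) k -> vanish_below c 0.
Proof.
move=> vu uk_neq0 [N vc] vuc.
suff upto j : forall n : int, n < 0 -> n < N + j%:Z -> c n = 0.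
  by move=> n lt_n0; apply: (upto (absz (n - N)%R).+1) => //; lia.
elim: j => [|j IH] n lt_n0 lt_nj; first by apply: vc; lia.
have [|ge_nj] := boolP (n < N + j%:Z); first exact: IH.
have eq_n : n = N + j%:Z by lia.
subst n.
have : mulL u c (k%:Z + N + j%:Z) = 0 by apply: vuc; lia.
rewrite (@mulL_window _ _ k N j) //; last by lia.
rewrite mul_windowE; last by lia.
have -> : absz (k%:Z + N + j%:Z - k%:Z - N)%R = j by lia.
rewrite coefMr big_ord_recr /= big1 => [|i _]; last first.
  have lt_ij := ltn_ord i.
  by rewrite [X in _ * X]coef_poly ltnS ltnW // IH ?mulr0 //; lia.
rewrite add0r subnn !coef_poly ltnS leqnn addr0 => /eqP.
by rewrite mulf_eq0 (negbTE uk_neq0) => /eqP.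
Qed.

Fixpoint inv_trunc (E : {poly K}) (n : nat) : {poly K} :=
  if n is p.+1 then
    inv_trunc E p - ((E * inv_trunc E p)`_p.+1 / E`_0) *: 'X^(p.+1)
  else (E`_0)^-1%:P.

Lemma coef_mul_inv_trunc (E : {poly K}) n i : E`_0 != 0 -> (i <= n)%N ->
  (E * inv_trunc E n)`_i = (i == 0)%:R.
Proof.
move=> E0; elim: n i => [|n IH] i le_i /=.
  by move: le_i; rewrite leqn0 => /eqP ->; rewrite coefMC mulfV.
rewrite mulrBr coefB -scalerAr coefZ coefMXn.
case: ltngtP le_i => // [lt_i _|-> _]; last by rewrite subnn divfK // subrr.
by rewrite mulr0 subr0 IH.
Qed.

Lemma coef_inv_trunc_stable (E : {poly K}) n m i : (i <= n)%N ->
  (inv_trunc E (n + m))`_i = (inv_trunc E n)`_i.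
Proof.
move=> le_i; elim: m => [|m IH]; first by rewrite addn0.
rewrite addnS /= coefB coefZ coefXn IH.
have -> : (i == (n + m).+1) = false by lia.
by rewrite mulr0 subr0.
Qed.

(* The inverse of [X^k E] is [X^-k] times the power-series inverse of [E],
   whose coefficients [inv_trunc] computes degree by degree. *)
Lemma laurent_poly_invertible u (k : nat) (E : {poly K}) :
    E`_0 != 0 -> vanish_below u 0 -> (forall j : nat, u j = ('X^k * E)`_j) ->
  exists d, is_laurent d /\ mulL u d = oneL K.
Proof.
move=> E0 vu eq_u.
pose d (n : int) :=
  if - (k%:Z) <= n then (inv_trunc E (absz (n + k%:Z)%R))`_(absz (n + k%:Z)%R) else 0.
have vd : vanish_below d (- (k%:Z)) by move=> n lt_n; rewrite /d ifF //; lia.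
exists d; split; first by exists (- (k%:Z)).
apply: funext => n; set m := absz (n - 0 - - (k%:Z))%R.
rewrite (@mulL_window _ _ 0 (- (k%:Z)) m) // /mul_window add0r.
case: ifP => le_n; last by rewrite /oneL; have -> : (n == 0) = false by lia.
rewrite (@coefM_eq_upto _ _ _ _ ('X^k * E) (inv_trunc E m)); first last.
- move=> i le_i; rewrite coef_poly ltnS le_i /d ifT; last by lia.
  have -> : absz (- (k%:Z) + i%:Z + k%:Z)%R = i by lia.
  by rewrite -(@coef_inv_trunc_stable E i (m - i)) // subnKC.
- by move=> i le_i; rewrite coef_poly ltnS le_i add0r eq_u.
rewrite -mulrA coefXnM /oneL; case: ltnP => le_km.
  by have -> : (n == 0) = false by lia.
rewrite coef_mul_inv_trunc ?leq_subr //.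
by congr (_%:R); lia.
Qed.

Lemma invLP c : (exists d, is_laurent d /\ mulL c d = oneL K) ->
  is_laurent (invL c) /\ mulL c (invL c) = oneL K.
Proof. by move=> h; rewrite /invL; case: pselect => // h'; case: (cid h'). Qed.

End LaurentSeries.

Section TaylorExpansion.
Variable K : fieldType.
Implicit Types (a : K) (P Q : {poly K}).

Definition shiftp a P := P \Po ('X + a%:P).

Lemma shiftpE a P : shiftp a P = \poly_(i < size P) (P^`N(i)).[a].
Proof.
rewrite /shiftp /comp_poly addrC (@nderiv_taylor_wide _ (size P)).
- by rewrite poly_def; apply: eq_bigr => i _; rewrite nderivn_map horner_map mul_polyC.
- exact: commr_polyX.
- by rewrite size_map_polyC.
Qed.

Lemma taylor_shiftp a P (m : nat) : taylor a P m = (shiftp a P)`_m.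
Proof.
rewrite shiftpE coef_poly /=; case: ltnP => // le_Pm.
by rewrite nderivn_poly0 ?horner0.
Qed.

Lemma shiftpM a P Q : shiftp a (P * Q) = shiftp a P * shiftp a Q.
Proof. exact: comp_polyM. Qed.

Lemma vanish_below_taylor a P : vanish_below (taylor a P) 0.
Proof. by case=> // m; lia. Qed.

Lemma taylor_laurent a P : is_laurent (taylor a P).
Proof. by exists 0; apply: vanish_below_taylor. Qed.

Lemma taylorM a P Q : taylor a (P * Q) = mulL (taylor a P) (taylor a Q).
Proof.
apply: funext => -[m|m]; last first.
  by rewrite (vanish_below_mulL (vanish_below_taylor a P) (vanish_below_taylor a Q)).
rewrite taylor_shiftp shiftpM; symmetry.
apply: mulL_series; try exact: vanish_below_taylor;
  by move=> i _; rewrite taylor_shiftp.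
Qed.

Lemma shiftp_XsubC_exp a k : shiftp a (('X - a%:P) ^+ k) = 'X^k.
Proof. by rewrite /shiftp rmorphXn /= comp_polyB comp_polyX comp_polyC addrK. Qed.

Lemma shiftpK a P : shiftp a P \Po ('X - a%:P) = P.
Proof. exact: comp_polyXaddC_K. Qed.

Lemma coef0_shiftp a P : (shiftp a P)`_0 = P.[a].
Proof. by rewrite -horner_coef0 horner_comp !hornerE. Qed.

Lemma size_shiftp a P : size (shiftp a P) = size P.
Proof. by rewrite size_comp_poly2 // size_XaddC. Qed.

Lemma taylorB a P Q n : taylor a (P - Q) n = taylor a P n - taylor a Q n.
Proof.
case: n => [m|m]; last by rewrite subr0.
by rewrite !taylor_shiftp /shiftp raddfB coefB.
Qed.

Lemma taylor_sum a (I : Type) (r : seq I) (F : I -> {poly K}) n :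
  taylor a (\sum_(i <- r) F i) n = \sum_(i <- r) taylor a (F i) n.
Proof.
case: n => [m|m]; last by rewrite /taylor big1.
rewrite taylor_shiftp /shiftp raddf_sum coef_sum.
by apply: eq_bigr => i _; rewrite taylor_shiftp.
Qed.

Lemma XsubC_exp_dvdp a k P : (forall j, (j < k)%N -> (shiftp a P)`_j = 0) ->
  ('X - a%:P) ^+ k %| P.
Proof.
move=> low0; have take0 : take_poly k (shiftp a P) = 0.
  by apply/polyP => j; rewrite coef_take_poly coef0; case: ifP => // /low0.
have e := poly_take_drop k (shiftp a P); rewrite take0 add0r in e.
by rewrite -(shiftpK a P) -e comp_polyM comp_Xn_poly dvdp_mulIr.
Qed.

Lemma shiftp_Jpoly a k (g : genfrac K) :
  shiftp a (Jpoly a k g) = \poly_(i < k.+1) g a i.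
Proof.
rewrite /shiftp /Jpoly raddf_sum poly_def; apply: eq_bigr => i _.
by rewrite /= comp_polyZ -/(shiftp a _) shiftp_XsubC_exp.
Qed.

End TaylorExpansion.

Lemma prod_XsubC_dvdp (F : fieldType) (rs : seq F) (P : {poly F}) :
    (forall a, ('X - a%:P) ^+ count_mem a rs %| P) ->
  \prod_(z <- rs) ('X - z%:P) %| P.
Proof.
elim: rs P => [|z rs IH] P dvdP; first by rewrite big_nil dvd1p.
have /dvdpP [Q eq_P] : 'X - z%:P %| P.
  by apply: dvdp_trans (dvdP z); rewrite /= eqxx dvdp_exp ?add1n.
subst P.
rewrite big_cons mulrC dvdp_mul2r ?polyXsubC_eq0 //; apply: IH => a.
have := dvdP a; rewrite /=; have [<-|neq_za] := eqVneq z a.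
  by rewrite add1n exprSr dvdp_mul2r ?polyXsubC_eq0.
rewrite add0n Gauss_dvdpl //.
by apply: coprimep_expl; rewrite coprimep_XsubC root_XsubC.
Qed.

Section GaussDivision.
Variable K : closedFieldType.
Variable D : {poly K}.
Hypothesis D_neq0 : D != 0.

Local Notation mu a := (mup a D).

Definition cofactor a := D %/ ('X - a%:P) ^+ mu a.

Lemma cofactorK a : cofactor a * ('X - a%:P) ^+ mu a = D.
Proof. by rewrite divpK // -mup_geq. Qed.

Lemma cofactor_neq0 a : cofactor a != 0.
Proof. by apply: contraNneq D_neq0 => cof0; rewrite -(cofactorK a) cof0 mul0r. Qed.

Lemma root_cofactor a : ~~ root (cofactor a) a.
Proof.
have Xa_neq0 : ('X - a%:P) ^+ mu a != 0 by rewrite expf_neq0 ?polyXsubC_eq0.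
have := mupM a (cofactor_neq0 a) Xa_neq0.
by rewrite cofactorK mup_XsubCX eqxx -dvdp_XsubCl XsubC_dvd ?cofactor_neq0 //; lia.
Qed.

Lemma shiftp_cofactor a : shiftp a D = 'X^(mu a) * shiftp a (cofactor a).
Proof. by rewrite -{1}(cofactorK a) shiftpM shiftp_XsubC_exp mulrC. Qed.

Lemma vanish_below_taylor_mu a : vanish_below (taylor a D) (mu a).
Proof.
case=> [m|m] lt_m; last exact: vanish_below_taylor.
by rewrite taylor_shiftp shiftp_cofactor coefXnM ifT //; lia.
Qed.

Lemma taylor_mu_neq0 a : taylor a D (mu a) != 0.
Proof.
rewrite taylor_shiftp shiftp_cofactor coefXnM ltnn subnn coef0_shiftp.
exact: root_cofactor.
Qed.

Lemma taylor_invLP a : is_laurent (invL (taylor a D)) /\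
  mulL (taylor a D) (invL (taylor a D)) = oneL K.
Proof.
apply: invLP; apply: (@laurent_poly_invertible _ _ (mu a) (shiftp a (cofactor a))).
- by rewrite coef0_shiftp; apply: root_cofactor.
- exact: vanish_below_taylor.
- by move=> j; rewrite taylor_shiftp shiftp_cofactor.
Qed.

Lemma mulL_taylor_divK a x : is_laurent x ->
  mulL (taylor a D) (mulL x (invL (taylor a D))) = x.
Proof.
move=> Lx; have [Li DVi] := taylor_invLP a; have LD := taylor_laurent a D.
by rewrite (mulLC LD (mulL_laurent Lx Li)) (mulLA Lx Li LD) (mulLC Li LD) DVi mulL1.
Qed.

Lemma mulL_taylor_inj a x y : is_laurent x -> is_laurent y ->
  mulL (taylor a D) x = mulL (taylor a D) y -> x = y.
Proof.
move=> Lx Ly eq_xy; have [Li DVi] := taylor_invLP a; have LD := taylor_laurent a D.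
suff DK z : is_laurent z -> mulL (invL (taylor a D)) (mulL (taylor a D) z) = z.
  by rewrite -(DK x) // eq_xy DK.
move=> Lz; rewrite -(mulLA Li LD Lz) (mulLC Li LD) DVi mulLC ?mulL1 //.
exact: oneL_laurent.
Qed.

Lemma small_poly_eq0 (P : {poly K}) : (size P < size D)%N ->
  (forall a (j : nat), (j < mu a)%N -> taylor a P j = 0) -> P = 0.
Proof.
move=> small vanP; apply/eqP; apply: contraLR small => P_neq0; rewrite -leqNgt.
apply: dvdp_leq => //; have [rs eqD] := closed_field_poly_normal D.
have lcD : lead_coef D != 0 by rewrite lead_coef_eq0.
rewrite eqD dvdpZl //; apply: prod_XsubC_dvdp => a.
have le_count : (count_mem a rs <= mu a)%N.
  rewrite mup_geq // eqD dvdpZr // -mup_geq ?mu_prod_XsubC //.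
  by rewrite monic_neq0 ?monic_prod_XsubC.
apply: dvdp_trans (dvdp_exp2l _ le_count) (XsubC_exp_dvdp _) => j lt_j.
by rewrite -taylor_shiftp vanP.
Qed.

Lemma quotient_unique q q' R : is_genpoly q -> is_genpoly q' ->
    addGF (mulGF (polyGF D) q) (polyGF R) = addGF (mulGF (polyGF D) q') (polyGF R) ->
  q = q'.
Proof.
move=> q0 q'0 eq_qq'; apply: funext => a.
apply: (@mulL_taylor_inj a); [by exists 0; apply: q0 | by exists 0; apply: q'0 |].
apply: funext => n; apply: (@addIr _ (taylor a R n)).
by move/(congr1 (fun h => h a n)): eq_qq'.
Qed.

Variable f : genfrac K.
Hypothesis f_genpoly : is_genpoly f.

Definition interpolates (R : {poly K}) :=
  forall a (j : nat), (j < mu a)%N -> taylor a R j = f a j.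

Lemma interpolates_unique (R R' : {poly K}) :
    (size R < size D)%N -> (size R' < size D)%N ->
  interpolates R -> interpolates R' -> R = R'.
Proof.
move=> sR sR' iR iR'; apply/eqP; rewrite -subr_eq0; apply/eqP.
apply: small_poly_eq0 => [|a j lt_j]; last by rewrite taylorB iR // iR' // subrr.
by rewrite (leq_ltn_trans (size_polyD _ _)) // size_polyN gtn_max sR sR'.
Qed.

Lemma interpolates_of_decomp q R : is_genpoly q ->
  f = addGF (mulGF (polyGF D) q) (polyGF R) -> interpolates R.
Proof.
move=> q0 eq_f a j lt_j; rewrite eq_f /addGF /addL /mulGF /polyGF.
by rewrite (vanish_below_mulL (vanish_below_taylor_mu (a := a)) (q0 a)) ?add0r //; lia.
Qed.

Lemma decomp_of_interpolates R : interpolates R ->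
  exists q, is_genpoly q /\ f = addGF (mulGF (polyGF D) q) (polyGF R).
Proof.
move=> iR; pose g a n := f a n - taylor a R n.
have Lg a : is_laurent (g a).
  by exists 0 => n lt_n; rewrite /g f_genpoly // vanish_below_taylor // subr0.
pose q a := mulL (g a) (invL (taylor a D)).
have Dq a : mulL (taylor a D) (q a) = g a by apply: mulL_taylor_divK.
exists q; split; last first.
  by apply: funext => a; apply: funext => n; rewrite /addGF /addL /mulGF /polyGF Dq subrK.
move=> a.
apply: (mulL_vanish_below_series (vanish_below_taylor_mu (a := a)) (taylor_mu_neq0 a)).
  by apply: mulL_laurent => //; case: (taylor_invLP a).
rewrite Dq => -[j|j] lt_j; rewrite /g; first by rewrite iR ?subrr //; lia.
by rewrite f_genpoly // vanish_below_taylor // subr0.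
Qed.

Definition local_frac a := divGF (mulGF f (polyGF (('X - a%:P) ^+ mu a))) D.

Lemma local_frac_cofactor a : mulL (local_frac a a) (taylor a (cofactor a)) = f a.
Proof.
have [Li DVi] := taylor_invLP a.
have Lf : is_laurent (f a) by exists 0; apply: f_genpoly.
have LX := taylor_laurent a (('X - a%:P) ^+ mu a).
have LC := taylor_laurent a (cofactor a).
have tD : taylor a D = mulL (taylor a (('X - a%:P) ^+ mu a)) (taylor a (cofactor a)).
  by rewrite -taylorM mulrC cofactorK.
rewrite /local_frac /divGF /mulGF /polyGF.
rewrite (mulLA (mulL_laurent Lf LX) Li LC) (mulLC Li LC).
by rewrite (mulLA Lf LX (mulL_laurent LC Li)) -(mulLA LX LC Li) -tD DVi mulL1.
Qed.

Lemma vanish_below_local_frac a : vanish_below (local_frac a a) 0.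
Proof.
have Ll : is_laurent (local_frac a a).
  apply: mulL_laurent; last by case: (taylor_invLP a).
  by apply: mulL_laurent; [exists 0; apply: f_genpoly | apply: taylor_laurent].
apply: (mulL_vanish_below_series (vanish_below_taylor a (cofactor a)) _ Ll).
  by rewrite taylor_shiftp coef0_shiftp; apply: root_cofactor.
rewrite (mulLC (taylor_laurent a (cofactor a)) Ll) local_frac_cofactor.
by move=> n; apply: f_genpoly.
Qed.

Lemma taylor_TG_term_self a (j : nat) : (j < mu a)%N ->
  taylor a (TG_term f D a) j = f a j.
Proof.
move=> lt_j; rewrite -local_frac_cofactor taylor_shiftp /TG_term -/(cofactor a).
rewrite shiftpM; symmetry; apply: mulL_series.
- exact: vanish_below_local_frac.
- exact: vanish_below_taylor.
- move=> i le_ij; rewrite shiftp_Jpoly coef_poly (ltn_predK lt_j).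
  by rewrite (leq_ltn_trans le_ij lt_j).
- by move=> i _; rewrite taylor_shiftp.
Qed.

Lemma taylor_TG_term_other a b (j : nat) : b != a -> (j < mu a)%N ->
  taylor a (TG_term f D b) j = 0.
Proof.
move=> neq_ba lt_j.
have /dvdpP [Q eq_cof] : ('X - a%:P) ^+ mu a %| cofactor b.
  have coprime_ab : coprimep (('X - a%:P) ^+ mu a) (('X - b%:P) ^+ mu b).
    by apply/coprimep_expl/coprimep_expr; rewrite coprimep_XsubC root_XsubC.
  by rewrite -(Gauss_dvdpl _ coprime_ab) cofactorK -mup_geq.
rewrite taylor_shiftp /TG_term -/(cofactor b) eq_cof !shiftpM shiftp_XsubC_exp.
by rewrite mulrA coefMXn lt_j.
Qed.

Lemma size_TG_term b : root D b -> (size (TG_term f D b) < size D)%N.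
Proof.
move=> Db; have mu_gt0 : (0 < mu b)%N by rewrite -XsubC_dvd // dvdp_XsubCl.
have size_J : (size (Jpoly b (mu b).-1 (local_frac b)) <= mu b)%N.
  by rewrite -(size_shiftp b) shiftp_Jpoly prednK // size_poly.
have size_cof : (size (cofactor b) + mu b)%N = size D.
  rewrite -{2}(cofactorK b) size_mul ?cofactor_neq0 ?expf_neq0 ?polyXsubC_eq0 //.
  by rewrite size_exp_XsubC addnS.
have size_cof_gt0 : (0 < size (cofactor b))%N by rewrite size_poly_gt0 cofactor_neq0.
rewrite /TG_term -/(cofactor b) -/(local_frac b).
apply: leq_ltn_trans (size_polyMleq _ _) _.
move: size_J size_cof size_cof_gt0.
by set sJ := size (Jpoly _ _ _); set sC := size (cofactor b); lia.
Qed.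

Section RootEnumeration.
Variable s : seq K.
Hypotheses (s_uniq : uniq s) (mem_s : forall a, (a \in s) = root D a).

Lemma interpolates_TG : interpolates (\sum_(b <- s) TG_term f D b).
Proof.
move=> a j lt_j; have s_a : a \in s by rewrite mem_s -dvdp_XsubCl XsubC_dvd //; lia.
rewrite taylor_sum (bigD1_seq a) // taylor_TG_term_self // big1_seq; first exact: addr0.
by move=> b /andP [neq_ba _]; apply: taylor_TG_term_other.
Qed.

Lemma size_TG_sum : (size (\sum_(b <- s) TG_term f D b)%R < size D)%N.
Proof.
rewrite big_seq; apply: (big_ind (fun P : {poly K} => (size P < size D)%N)).
- by rewrite size_poly0 size_poly_gt0.
- by move=> P Q sP sQ; rewrite (leq_ltn_trans (size_polyD P Q)) // gtn_max sP sQ.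
- by move=> b; rewrite mem_s; apply: size_TG_term.
Qed.

End RootEnumeration.

End GaussDivision.

Theorem taylor_gauss_division (K : closedFieldType) (f : genfrac K) (D : {poly K}) :
  is_genpoly f -> D != 0 ->
  exists (q : genfrac K) (Rm : {poly K}),
    [/\ is_genpoly q, (size Rm < size D)%N
      & f = addGF (mulGF (polyGF D) q) (polyGF Rm)] /\
    (forall (q' : genfrac K) (Rm' : {poly K}),
        is_genpoly q' -> (size Rm' < size D)%N ->
        f = addGF (mulGF (polyGF D) q') (polyGF Rm') ->
        q' = q /\ Rm' = Rm) /\
    (forall s : seq K, uniq s -> (forall a, (a \in s) = root D a) ->
        Rm = \sum_(a <- s) TG_term f D a).
Proof.
move=> f_genpoly D_neq0.
have [s [s_uniq mem_s]] : exists s : seq K, uniq s /\ forall a, (a \in s) = root D a.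
  have [rs eqD] := closed_field_poly_normal D.
  exists (undup rs); split=> [|a]; first exact: undup_uniq.
  by rewrite mem_undup eqD rootZ ?lead_coef_eq0 // root_prod_XsubC.
have iR := interpolates_TG D_neq0 f_genpoly s_uniq mem_s.
have sR := size_TG_sum D_neq0 f mem_s.
have [q [q_genpoly eq_f]] := decomp_of_interpolates D_neq0 f_genpoly iR.
exists q, (\sum_(a <- s) TG_term f D a); split=> //.
split=> [q' R' q'_genpoly sR' eq_f' | s' s'_uniq mem_s'].
  have iR' := interpolates_of_decomp D_neq0 q'_genpoly eq_f'.
  have eq_R := interpolates_unique D_neq0 sR' sR iR' iR.
  subst R'; split=> //.
  apply: (quotient_unique D_neq0 q'_genpoly q_genpoly).
  exact: etrans (esym eq_f') eq_f.
apply: (interpolates_unique D_neq0 sR (size_TG_sum D_neq0 f mem_s') iR).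
exact: interpolates_TG.
Qed.

Theorem mainTheorem1 (R : realType) (f : genfrac R[i]) (D : {poly R[i]}) :
  is_genpoly f -> (1 < size D)%N ->
  exists (q : genfrac R[i]) (Rm : {poly R[i]}),
    [/\ is_genpoly q, (size Rm < size D)%N
      & f = addGF (mulGF (polyGF D) q) (polyGF Rm)] /\
    (forall (q' : genfrac R[i]) (Rm' : {poly R[i]}),
        is_genpoly q' -> (size Rm' < size D)%N ->
        f = addGF (mulGF (polyGF D) q') (polyGF Rm') ->
        q' = q /\ Rm' = Rm) /\
    (forall s : seq R[i], uniq s -> (forall a, (a \in s) = root D a) ->
        Rm = \sum_(a <- s) TG_term f D a).
Proof.
move=> f_genpoly size_D; apply: taylor_gauss_division => //.
by rewrite -size_poly_gt0; apply: ltn_trans size_D.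
Qed.
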